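(* For all $n \geq 0$: $$\sum_{k:\, a(k) \leq n} a(k) = \begin{cases} \frac{n^2}{4} - \frac{n}{4} + n\,t(n) & \text{if } n \equiv 0 \pmod 4,\\ \frac{n^2}{4} + \frac{n}{4} - \frac12 + t(n) & \text{if } n \equiv 1 \pmod 4,\\ \frac{n^2}{4} - \frac{n}{4} - \frac12 + (n+1)t(n) & \text{if } n \equiv 2 \pmod 4,\\ \frac{n^2}{4} + \frac{n}{4} & \text{if } n \equiv 3 \pmod 4,\end{cases}$$ $$\sum_{k:\, b(k) \leq n} b(k) = \begin{cases} \frac{n^2}{4} + \frac{3n}{4} - n\,t(n) & \text{if } n \equiv 0 \pmod 4,\\ \frac{n^2}{4} + \frac{n}{4} + \frac12 - t(n) & \text{if } n \equiv 1 \pmod 4,\\ \frac{n^2}{4} + \frac{3n}{4} + \frac12 - (n+1)t(n) & \text{if } n \equiv 2 \pmod 4,\\ \frac{n^2}{4} + \frac{n}{4} & \text{if } n \equiv 3 \pmod 4.\end{cases}$$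
   Context: The Thue–Morse sequence $(t(n))_{n\geq 0}$ is defined by $t(0)=0$, $t(2n)=t(n)$, $t(2n+1)=1-t(n)$. A nonnegative integer is odious if the sum of its binary digits is odd and evil if it is even. $(a(n))_{n\geq0}$ is the increasing sequence of odious numbers and $(b(n))_{n\geq 0}$ the increasing sequence of evil numbers, both indexed from $0$ (so $a(0)=1, a(1)=2,\ldots$ and $b(0)=0, b(1)=3, \ldots$). *)

From mathcomp Require Import all_boot all_order all_algebra.
Set Implicit Arguments. Unset Strict Implicit. Unset Printing Implicit Defensive.

Fixpoint digsum_aux (fuel n : nat) : nat :=
  match fuel with
  | 0 => 0
  | f.+1 => if n is 0 then 0 else odd n + digsum_aux f n./2
  end.
Definition digsum (n : nat) : nat := digsum_aux n n.

(* Thue--Morse: t(0)=0, t(2n)=t(n), t(2n+1)=1-t(n)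
   (structural recursion with fuel n >= number of binary digits). *)
Fixpoint tm_aux (fuel n : nat) : nat :=
  match fuel with
  | 0 => 0
  | f.+1 => if n is 0 then 0
            else if odd n then 1 - tm_aux f n./2 else tm_aux f n./2
  end.
Definition tm (n : nat) : nat := tm_aux n n.

Definition odious (n : nat) : bool := odd (digsum n).
Definition evil (n : nat) : bool := ~~ odd (digsum n).

(* The increasing enumeration (from index 0) of the numbers satisfying P,
   assuming at least k+1 of them lie below 2k+2 (true for odious/evil). *)
Definition enum_inc (P : pred nat) (k : nat) : nat :=
  nth 0 [seq m <- iota 0 (2 * k + 2) | P m] k.

Definition a (k : nat) : nat := enum_inc odious k.
Definition b (k : nat) : nat := enum_inc evil k.

From mathcomp Require Import all_boot all_order all_algebra.
From mathcomp Require Import zify ring.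
Import GRing.Theory Num.Theory.

(* Since t(2j+1) = 1 - t(2j), each pair {2j, 2j+1} contains exactly one odious
   and one evil number, so a(k) and b(k) both lie in {2k, 2k+1}.  Hence
   a(k) <= n already forces k <= n, and the sums in the theorem are just the
   sums of the odious (resp. evil) numbers up to n.  The odious sum is checked
   against the closed form by induction on n, using how t(n+1) relates to t(n)
   for each residue of n mod 4; the evil sum is the complement in 0 + ... + n. *)

Lemma tm_aux_fuel f g n : n <= f -> n <= g -> tm_aux f n = tm_aux g n.
Proof.
elim: f g n => [|f IH] [|g] [|n] //= n_le_f n_le_g.
by rewrite (IH g); lia.
Qed.

Lemma tm_rec n : 0 < n -> tm n = if odd n then 1 - tm n./2 else tm n./2.
Proof.
case: n => // n _; rewrite /tm /= (@tm_aux_fuel n (uphalf n)) //.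
by rewrite leq_uphalf_double -addnn leq_addr.
Qed.

Lemma tm_aux_digsum_aux f n : tm_aux f n = odd (digsum_aux f n).
Proof.
elim: f n => [|f IH] [|n] //=.
by rewrite IH oddD; case: (odd n); case: (odd (digsum_aux _ _)).
Qed.

Lemma tm_odious n : tm n = odious n.
Proof. exact: tm_aux_digsum_aux. Qed.

Lemma odious_tm n : odious n = (tm n == 1).
Proof. by rewrite tm_odious; case: (odious n). Qed.

Lemma odious_double k : odious k.*2 = odious k.
Proof. by case: k => // k; rewrite !odious_tm tm_rec ?double_gt0 // odd_double doubleK. Qed.

Lemma odious_doubleS k : odious k.*2.+1 = ~~ odious k.
Proof.
rewrite !odious_tm tm_rec //= odd_double uphalf_double tm_odious.
by case: (odious k).
Qed.

Lemma odious_doubleS_double j : odious j.*2.+1 = ~~ odious j.*2.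
Proof. by rewrite odious_doubleS odious_double. Qed.

Lemma evil_doubleS_double j : evil j.*2.+1 = ~~ evil j.*2.
Proof. exact: (congr1 negb (odious_doubleS_double j)). Qed.

Section PairwiseComplementaryEnumeration.

Variable P : pred nat.
Hypothesis P_doubleS : forall j, P j.*2.+1 = ~~ P j.*2.

Definition pair_pick j := if P j.*2 then j.*2 else j.*2.+1.

Lemma filter_iota_double k : [seq m <- iota 0 k.*2 | P m] = mkseq pair_pick k.
Proof.
elim: k => // k IH.
rewrite doubleS -addn2 iotaD filter_cat IH mkseqS -cats1 /= P_doubleS /pair_pick.
by case: (P k.*2).
Qed.

Lemma enum_inc_pair_pick k : enum_inc P k = pair_pick k.
Proof.
by rewrite /enum_inc addn2 mul2n -doubleS filter_iota_double nth_mkseq.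
Qed.

Lemma big_enum_inc_le (R : nmodType) (F : nat -> R) n :
  (\sum_(0 <= k < n.+1 | (enum_inc P k <= n)%N) F (enum_inc P k) =
   \sum_(0 <= m < n.+1 | P m) F m)%R.
Proof.
under eq_bigl do rewrite enum_inc_pair_pick.
under eq_bigr do rewrite enum_inc_pair_pick.
rewrite -(big_map pair_pick (fun m => m <= n)).
rewrite -[map pair_pick _]/(mkseq pair_pick n.+1) -filter_iota_double big_filter_cond.
by rewrite (@big_nat_widen _ _ _ _ _ n.+1.*2) // -addnn leq_addr.
Qed.

End PairwiseComplementaryEnumeration.

Lemma odious_succ_even n : ~~ odd n -> odious n.+1 = ~~ odious n.
Proof. by move=> /even_halfK <-; rewrite odious_doubleS odious_double. Qed.

Lemma odious_succ_mod4_1 n : n %% 4 = 1 -> odious n.+1 = odious n.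
Proof.
move=> n_mod; rewrite (divn_eq n 4) n_mod -[4]/(2 * 2) mulnA !muln2 addn1.
by rewrite -doubleS odious_double !odious_doubleS odious_double.
Qed.

Local Open Scope ring_scope.

Definition odious_sum_closed_form (n : nat) : rat :=
  let N : rat := n%:R in
  let T : rat := (tm n)%:R in
  if (n %% 4 == 0)%N then N ^+ 2 / 4 - N / 4 + N * T
  else if (n %% 4 == 1)%N then N ^+ 2 / 4 + N / 4 - 1 / 2 + T
  else if (n %% 4 == 2)%N then N ^+ 2 / 4 - N / 4 - 1 / 2 + (N + 1) * T
  else N ^+ 2 / 4 + N / 4.

Lemma odious_sum_closed_form_succ n :
  odious_sum_closed_form n.+1 =
  odious_sum_closed_form n + (if odious n.+1 then n.+1%:R else 0).
Proof.
have succ_mod : (n.+1 %% 4 = (n %% 4).+1 %% 4)%N by rewrite -addn1 -modnDml addn1.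
have odd_mod4 : odd n = odd (n %% 4) by rewrite odd_mod.
rewrite /odious_sum_closed_form succ_mod -natr1 !tm_odious.
case n_mod : (n %% 4)%N (ltn_mod n 4) => [|[|[|[|r]]]] //= _.
- by rewrite odious_succ_even ?odd_mod4 ?n_mod //; case: (odious n) => /=; field.
- by rewrite odious_succ_mod4_1 //; case: (odious n) => /=; field.
- by rewrite odious_succ_even ?odd_mod4 ?n_mod //; case: (odious n) => /=; field.
- by case: (odious n.+1) => /=; field.
Qed.

Lemma sum_odious n :
  \sum_(0 <= m < n.+1 | odious m) m%:R = odious_sum_closed_form n.
Proof.
elim: n => [|n IH]; first by rewrite big_mkcond big_nat1 /odious_sum_closed_form /=; field.
by rewrite big_mkcond big_nat_recr //= -big_mkcond IH odious_sum_closed_form_succ.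
Qed.

Lemma triangular_sumr (R : numFieldType) n :
  \sum_(0 <= m < n.+1) m%:R = (n%:R ^+ 2 + n%:R) / 2 :> R.
Proof.
elim: n => [|n IH]; first by rewrite big_nat1 /=; field.
by rewrite big_nat_recr //= IH -natr1; field.
Qed.

Lemma sum_evil n :
  \sum_(0 <= m < n.+1 | evil m) m%:R =
  (n%:R ^+ 2 + n%:R) / 2 - odious_sum_closed_form n :> rat.
Proof.
by rewrite -triangular_sumr -sum_odious [in RHS](bigID odious) /= addrAC subrr add0r.
Qed.

Theorem corollary2 (n : nat) :
  let N : rat := n%:R in
  let T : rat := (tm n)%:R in
  ((\sum_(0 <= k < n.+1 | (a k <= n)%N) (a k)%:R : rat) =
     if (n %% 4 == 0)%N then N ^+ 2 / 4 - N / 4 + N * T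
     else if (n %% 4 == 1)%N then N ^+ 2 / 4 + N / 4 - 1 / 2 + T
     else if (n %% 4 == 2)%N then N ^+ 2 / 4 - N / 4 - 1 / 2 + (N + 1) * T
     else N ^+ 2 / 4 + N / 4)
  /\
  ((\sum_(0 <= k < n.+1 | (b k <= n)%N) (b k)%:R : rat) =
     if (n %% 4 == 0)%N then N ^+ 2 / 4 + 3 * N / 4 - N * T
     else if (n %% 4 == 1)%N then N ^+ 2 / 4 + N / 4 + 1 / 2 - T
     else if (n %% 4 == 2)%N then N ^+ 2 / 4 + 3 * N / 4 + 1 / 2 - (N + 1) * T
     else N ^+ 2 / 4 + N / 4).
Proof.
move=> N T; split.
  rewrite (@big_enum_inc_le _ odious_doubleS_double _ (fun m => m%:R)).
  exact: sum_odious.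
rewrite (@big_enum_inc_le _ evil_doubleS_double _ (fun m => m%:R)) sum_evil.
rewrite /odious_sum_closed_form /N /T.
by case: (n %% 4)%N => [|[|[|r]]] /=; field.
Qed.
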